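(* For a period $p\in\mathcal{P}_{KZ}$, $\deg(p)=1$ if and only if $p\in\mathbb{R}_{\mathrm{alg}}^\times$ (i.e. $p$ is a nonzero real algebraic number).
   Context: $\mathbb{R}_{\mathrm{alg}}=\mathbb{R}\cap\overline{\mathbb{Q}}$. Semialgebraic subsets of $\mathbb{R}^n$ are finite unions of finite intersections of sets $\{f=0\}$, $\{g>0\}$ with $f,g\in\mathbb{R}_{\mathrm{alg}}[T_1,\dots,T_n]$; $\mathcal{SA}^n$ denotes those with nonempty interior. A period is a real number $\int_X (P/Q)(x)\,dx$ (absolutely convergent) with $X\in\mathcal{SA}^n$, $P,Q\in\mathbb{R}_{\mathrm{alg}}[T_1,\dots,T_n]$, $Q$ not identically zero on $X$; $\mathcal{P}_{KZ}$ is the set of periods. For a nonzero period $p$ there exists a positive integer $k$ and a compact $K\in\mathcal{SA}^k$ with $|p|=\mathrm{vol}_k(K)$ (Lebesgue measure); the degree $\deg(p)$ is the smallest positive integer $k$ for which such a compact $K\in\mathcal{SA}^k$ exists, and $\deg(0)=0$. *)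

From HB Require Import structures.
From mathcomp Require Import all_boot all_order all_algebra.
From mathcomp Require Import all_classical all_reals all_analysis.
From mathcomp Require mpoly.
From Stdlib Require Lists.List.

Set Implicit Arguments.
Unset Strict Implicit.
Unset Printing Implicit Defensive.

Import Order.TTheory GRing.Theory Num.Theory.
Import numFieldNormedType.Exports.
Local Open Scope classical_set_scope.
Local Open Scope ring_scope.

Section KZ.
Variable R : realType.

Definition algebraic (x : R) : Prop :=
  exists q : {poly rat}, q != 0 /\ root (map_poly ratr q) x.

Definition pt_eval (n : nat) (P : mpoly.mpoly n R) (x : 'rV[R]_n) : R :=
  mpoly.meval (fun i => x ord0 i) P.

Definition alg_poly (n : nat) (P : mpoly.mpoly n R) : Prop :=
  forall m : mpoly.multinom n, algebraic (mpoly.mcoeff m P).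

(* A semialgebraic description: a finite union (outer seq) of finite
   intersections (inner seqs) of atoms; an atom (true, f) means {f = 0},
   an atom (false, g) means {g > 0}. *)
Definition sa_atom_holds (n : nat) (a : bool * mpoly.mpoly n R)
    (x : 'rV[R]_n) : bool :=
  if a.1 then pt_eval a.2 x == 0 else 0 < pt_eval a.2 x.

Definition sa_set (n : nat) (F : seq (seq (bool * mpoly.mpoly n R)))
  : set 'rV[R]_n :=
  [set x | has (fun c => all (fun a => sa_atom_holds a x) c) F].

Definition semialgebraic (n : nat) (X : set 'rV[R]_n) : Prop :=
  exists F : seq (seq (bool * mpoly.mpoly n R)),
    (forall (c : seq (bool * mpoly.mpoly n R)), Stdlib.Lists.List.In c F ->
       forall (a : bool * mpoly.mpoly n R), Stdlib.Lists.List.In a c -> alg_poly a.2) /\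
    X = sa_set F.

Definition SA (n : nat) (X : set 'rV[R]_n) : Prop :=
  semialgebraic X /\ (interior X !=set0).

(* prepend a coordinate: (x, v) |-> (x, v_1, ..., v_n) in R^(n+1) *)
Definition rcons0 (n : nat) (x : R) (v : 'rV[R]_n) : 'rV[R]_n.+1 :=
  \row_(i < n.+1) (match unlift ord0 i with
                   | Some j => v ord0 j
                   | None => x end).

(* For
   nonnegative measurable functions (in particular for all functions
   below, which are built from semialgebraic sets and rational functions)
   this is the Lebesgue integral on R^n by Tonelli's theorem. *)
Fixpoint iint (n : nat) : ('rV[R]_n -> \bar R) -> \bar R :=
  match n return ('rV[R]_n -> \bar R) -> \bar R with
  | 0 => fun f => f 0
  | n'.+1 => fun f =>
      (\int[lebesgue_measure]_x iint (fun v => f (rcons0 x v)))%E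
  end.

Definition vol (n : nat) (A : set 'rV[R]_n) : \bar R :=
  iint (fun v => (\1_A v)%:E).

(* the integrand P/Q (set to 0 on the null set {Q = 0}) *)
Definition ratfun (n : nat) (P Q : mpoly.mpoly n R) (x : 'rV[R]_n) : R :=
  if pt_eval Q x == 0 then 0 else pt_eval P x / pt_eval Q x.

Definition is_period_integral (n : nat) (X : set 'rV[R]_n)
    (P Q : mpoly.mpoly n R) (p : R) : Prop :=
  let f := fun x => \1_X x * ratfun P Q x in
  (iint (fun x => `|f x|%:E) < +oo)%E /\
  p = fine (iint (fun x => (Num.max (f x) 0)%:E))
      - fine (iint (fun x => (Num.max (- f x) 0)%:E)).

Definition is_period (p : R) : Prop :=
  exists (n : nat) (X : set 'rV[R]_n) (P Q : mpoly.mpoly n R),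
    (0 < n)%N /\ SA X /\ alg_poly P /\ alg_poly Q /\
    (exists x, X x /\ pt_eval Q x != 0) /\
    is_period_integral X P Q p.

Definition deg_admissible (p : R) (k : nat) : Prop :=
  (0 < k)%N /\
  exists K : set 'rV[R]_k, SA K /\ compact K /\ vol K = (`|p|)%:E.

(* deg p : smallest admissible positive k; deg 0 = 0.  (If no admissible
   k existed the value would be 0; for nonzero periods one exists.) *)
Definition deg (p : R) : nat :=
  if pselect (p = 0) then 0%N else
  match pselect (exists k, `[< deg_admissible p k >]) with
  | left H => ex_minn H
  | right _ => 0%N
  end.

End KZ.

From HB Require Import structures.
From mathcomp Require Import all_boot all_order all_algebra.
From mathcomp Require Import all_classical all_reals all_analysis.
From mathcomp Require Import polyrcf.
From mathcomp Require mpoly.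
Import (canonicals) mpoly.

(* A semialgebraic subset K of R is cut out by sign conditions on finitely
   many polynomials with real algebraic coefficients.  Their real roots are
   algebraic, and between two consecutive roots every sign condition, hence
   membership in K, is constant.  So a compact such K is, up to finitely many
   points, a finite union of intervals with algebraic endpoints, and its
   length is algebraic.  Conversely a nonzero algebraic p is the length of
   the compact semialgebraic segment [0, |p|], and 1 is the least possible
   degree. *)

Set Implicit Arguments.
Unset Strict Implicit.
Unset Printing Implicit Defensive.

Import Order.TTheory GRing.Theory Num.Theory.
Import numFieldNormedType.Exports.
Local Open Scope classical_set_scope.
Local Open Scope ring_scope.

Section AlgebraicReals.
Variable R : realType.
Implicit Types x y : R.

Lemma algebraicE x :
  algebraic x <-> algebraicOver (ratr : {rmorphism rat -> R}) x.
Proof. by split=> [[q [q0 qx]]|[q q0 qx]]; exists q. Qed.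

Lemma algebraicD x y : algebraic x -> algebraic y -> algebraic (x + y).
Proof.
by move=> /algebraicE ? /algebraicE ?; apply/algebraicE/algebraic_add.
Qed.

Lemma algebraicB x y : algebraic x -> algebraic y -> algebraic (x - y).
Proof.
by move=> /algebraicE ? /algebraicE ?; apply/algebraicE/algebraic_sub.
Qed.

Lemma algebraicM x y : algebraic x -> algebraic y -> algebraic (x * y).
Proof.
by move=> /algebraicE ? /algebraicE ?; apply/algebraicE/algebraic_mul.
Qed.

Lemma algebraicN x : algebraic x -> algebraic (- x).
Proof. by move=> /algebraicE ?; apply/algebraicE/algebraic_opp. Qed.

Lemma algebraic_nat n : algebraic (n%:R : R).
Proof.
apply/algebraicE; rewrite -(rmorph_nat (ratr : {rmorphism rat -> R})).
exact: algebraic_id.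
Qed.

Lemma algebraic_zero : algebraic (0 : R).
Proof. exact/algebraicE/algebraic0. Qed.

Lemma algebraic_norm x : algebraic `|x| <-> algebraic x.
Proof. by case: (ger0P x) => _ //; split=> /algebraicN; rewrite ?opprK. Qed.

Lemma algebraic_root (q : {poly R}) x :
  q != 0 -> root q x -> (forall i, algebraic q`_i) -> algebraic x.
Proof.
move=> q0 qx q_alg; apply/algebraicE/integral_algebraic.
apply: (integral_root q0 qx) => _ /(nthP 0) [i _ <-].
exact/integral_algebraic/algebraicE.
Qed.

End AlgebraicReals.

Section AlgebraicMeasure.
Variable R : realType.
Implicit Types (a b : R) (A B : set R).

Definition algebraic_measurable A :=
  measurable A /\ exists2 r, algebraic r & lebesgue_measure A = r%:E.

Lemma algebraic_measurable0 : algebraic_measurable set0.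
Proof. by split=> //; exists 0; [exact: algebraic_zero|rewrite measure0]. Qed.

Lemma algebraic_measurable_sub1 A b : A `<=` [set b] -> algebraic_measurable A.
Proof.
case/subset_set1 => ->; first exact: algebraic_measurable0.
split; first exact: measurable_set1.
by exists 0; [exact: algebraic_zero|rewrite lebesgue_measure_set1].
Qed.

Lemma algebraic_measurable_itvoo a b :
  algebraic a -> algebraic b -> algebraic_measurable `]a, b[.
Proof.
move=> alg_a alg_b; split; first exact: measurable_itv.
rewrite lebesgue_measure_itv /=; case: ifP => _.
  by exists (b - a); [exact: algebraicB|rewrite EFinB].
by exists 0; [exact: algebraic_zero|].
Qed.

Lemma algebraic_measurableU A B : A `&` B = set0 ->
  algebraic_measurable A -> algebraic_measurable B ->
  algebraic_measurable (A `|` B).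
Proof.
move=> AB0 [mA [r alg_r Ar]] [mB [s alg_s Bs]].
split; first exact: measurableU.
exists (r + s); first exact: algebraicD.
by rewrite EFinD -Ar -Bs; apply: measureU.
Qed.

End AlgebraicMeasure.

Section LocallyConstantSubsets.
Variables (R : realType) (K : set R) (S : seq R).
Implicit Types a b : R.

Hypothesis K_const : forall a b x y, (forall s, s \in S -> ~~ (a < s < b)) ->
  a < x < b -> a < y < b -> K x -> K y.

Lemma algebraic_measurable_itvoo_free a b : algebraic a -> algebraic b ->
  (forall s, s \in S -> ~~ (a < s < b)) ->
  algebraic_measurable (K `&` `]a, b[).
Proof.
move=> alg_a alg_b S_free.
have [[x [Kx /= abx]]|K0] := pselect (exists x, (K `&` `]a, b[) x).
  suff -> : K `&` `]a, b[ = `]a, b[%classic.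
    exact: algebraic_measurable_itvoo.
  apply/seteqP; split=> [y []//|y /= aby]; split=> //.
  by rewrite in_itv /= in abx aby; apply: K_const S_free abx aby Kx.
suff -> : K `&` `]a, b[ = set0 by exact: algebraic_measurable0.
by apply/seteqP; split=> // y Ky; apply: K0; exists y.
Qed.

Lemma algebraic_measurable_itvoc_free a b : algebraic a -> algebraic b ->
  (forall s, s \in S -> ~~ (a < s < b)) ->
  algebraic_measurable (K `&` `]a, b]).
Proof.
move=> alg_a alg_b S_free; have [ab|ba] := ltP a b; last first.
  rewrite set_itv_ge ?setI0 -?leNgt ?bnd_simp //.
  exact: algebraic_measurable0.
rewrite -(@setUitv1 _ _ _ b true) ?bnd_simp // setIUr.
apply: algebraic_measurableU.
- apply/seteqP; split=> // x [[_ /=]]; rewrite in_itv /= => /andP[_ xb] [_ xe].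
  by move: xb; rewrite xe ltxx.
- exact: algebraic_measurable_itvoo_free.
- by apply: (@algebraic_measurable_sub1 _ _ b); apply: subIsetr.
Qed.

Lemma algebraic_measurable_itvoc_cover (S' : seq R) a b :
  (forall s, s \in S' -> algebraic s) -> algebraic a -> algebraic b ->
  (forall s, s \in S -> a < s < b -> s \in S') ->
  algebraic_measurable (K `&` `]a, b]).
Proof.
elim: S' a b => [|z S' IH] a b alg_S' alg_a alg_b S_cover.
  apply: algebraic_measurable_itvoc_free => // s /S_cover.
  by case: (a < s < b) => // /(_ isT).
have alg_z : algebraic z by apply: alg_S'; rewrite mem_head.
have {}alg_S' s : s \in S' -> algebraic s.
  by move=> sS'; apply: alg_S'; rewrite inE sS' orbT.
have S'_cover c d : a <= c -> d <= b -> ~~ (c < z < d) ->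
    forall s, s \in S -> c < s < d -> s \in S'.
  move=> ac db zcd s sS /andP[cs sd].
  have /predU1P[sz|//] := S_cover s sS (andb_true_intro
    (conj (le_lt_trans ac cs) (lt_le_trans sd db))).
  by move: zcd; rewrite -sz cs sd.
have [/andP[az zb]|zab] := boolP (a < z < b).
  2: exact: IH (S'_cover _ _ _ _ zab).
have -> : K `&` `]a, b] = (K `&` `]a, z]) `|` (K `&` `]z, b]).
  by rewrite -setIUr -itv_bndbnd_setU // bnd_simp ltW.
apply: algebraic_measurableU.
- apply/seteqP; split=> // x [[_ /=]] + [_ /=]; rewrite !in_itv /=.
  by move=> /andP[_ xz] /andP[zx _]; move: (le_lt_trans xz zx); rewrite ltxx.
- by apply: IH (S'_cover _ _ _ _ _) => //; rewrite ?ltW // ltxx andbF.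
- by apply: IH (S'_cover _ _ _ _ _) => //; rewrite ?ltW // ltxx.
Qed.

Hypothesis S_algebraic : forall s, s \in S -> algebraic s.

Lemma algebraic_measurable_itvoc a b :
  algebraic a -> algebraic b -> algebraic_measurable (K `&` `]a, b]).
Proof.
by move=> alg_a alg_b; apply: (algebraic_measurable_itvoc_cover S_algebraic).
Qed.

End LocallyConstantSubsets.

Section RealLine.
Variable R : realType.
Implicit Types (x : R) (P : mpoly.mpoly 1 R).

Definition rV1 x : 'rV[R]_1 := rcons0 x 0.

Lemma rV1E x : rV1 x ord0 ord0 = x.
Proof. by rewrite /rV1 /rcons0 mxE unlift_none. Qed.

Definition upoly P : {poly R} :=
  \sum_(m <- mpoly.msupp P)
    mpoly.mcoeff m P *: 'X^(mpoly.fun_of_multinom m ord0).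

Lemma horner_upoly P x : (upoly P).[x] = pt_eval P (rV1 x).
Proof.
rewrite /pt_eval mpoly.mevalE /upoly horner_sum; apply: eq_bigr => m _.
by rewrite hornerZ hornerXn big_ord1 rV1E.
Qed.

Lemma upoly_coef_algebraic P : alg_poly P -> forall i, algebraic (upoly P)`_i.
Proof.
move=> P_alg i; rewrite /upoly coef_sum.
apply: (big_ind (@algebraic R)) => [|x y|m _]; first exact: algebraic_zero.
  exact: algebraicD.
by rewrite coefZ coefXn; apply: algebraicM => //; apply: algebraic_nat.
Qed.

Lemma vol_rV1 (K : set 'rV[R]_1) :
  measurable (rV1 @^-1` K) -> vol K = lebesgue_measure (rV1 @^-1` K).
Proof.
(* On R^1, [vol] unfolds to this integral. *)
move=> mK; transitivity (\int[lebesgue_measure]_x (\1_(rV1 @^-1` K) x)%:E)%E.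
  by [].
by rewrite integral_indic // setIT.
Qed.

Lemma compact_rV1_bounded (K : set 'rV[R]_1) :
  compact K -> exists N : nat, rV1 @^-1` K `<=` `]- N%:R, N%:R].
Proof.
move=> K_compact.
have coord_compact : compact ((fun v : 'rV[R]_1 => v ord0 ord0) @` K).
  apply: continuous_compact => //.
  exact/continuous_subspaceT/coord_continuous.
have [M [_ M_bound]] := compact_bounded coord_compact.
exists (Num.truncn (`|M| + 1)).+1 => x Kx.
have x_le : `|x| <= `|M| + 1.
  apply: M_bound; first by rewrite (le_lt_trans (ler_norm M)) ?ltrDl.
  by exists (rV1 x); rewrite ?rV1E.
have := le_lt_trans x_le (truncnS_gt _).
by rewrite /= in_itv /= ltr_norml => /andP[-> /ltW ->].
Qed.

End RealLine.
Arguments rV1 {R}.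

Lemma mem_In (T : eqType) (x : T) (s : seq T) : x \in s -> List.In x s.
Proof.
by elim: s => [//|y s IH]; rewrite inE => /predU1P[->|/IH]; [left|right].
Qed.

Lemma mem_rootsR (R : rcfType) (q : {poly R}) (x : R) :
  (x \in rootsR q) = (q != 0) && root q x.
Proof.
by have [->|q0] := eqVneq q 0; rewrite ?rootsR0 // -roots_on_rootsR.
Qed.

Section SemialgebraicLine.
Variables (R : realType) (F : seq (seq (bool * mpoly.mpoly 1 R))).

Definition sa_breakpoints : seq R :=
  flatten [seq rootsR (upoly a.2) | a <- flatten F].

Lemma sa_breakpoints_algebraic :
  (forall c a, c \in F -> a \in c -> alg_poly a.2) ->
  forall s, s \in sa_breakpoints -> algebraic s.
Proof.
move=> F_alg s /flattenP[_ /mapP[a /flattenP[c cF ac] ->]].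
rewrite mem_rootsR => /andP[q0 qs].
exact/(algebraic_root q0 qs)/upoly_coef_algebraic/(F_alg c).
Qed.

Lemma sa_atom_holds_sgr (a : bool * mpoly.mpoly 1 R) x y :
  Num.sg (upoly a.2).[x] = Num.sg (upoly a.2).[y] ->
  sa_atom_holds a (rV1 x) = sa_atom_holds a (rV1 y).
Proof.
rewrite /sa_atom_holds -!horner_upoly => e; case: a.1.
  by rewrite -sgr_eq0 e sgr_eq0.
by rewrite -sgr_gt0 e sgr_gt0.
Qed.

Lemma sa_set_locally_constant a b x y :
  (forall s, s \in sa_breakpoints -> ~~ (a < s < b)) ->
  a < x < b -> a < y < b -> sa_set F (rV1 x) -> sa_set F (rV1 y).
Proof.
move=> free abx aby; rewrite /sa_set /=; congr (is_true _).
apply: eq_in_has => c cF.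
apply: eq_in_all => atm atc; apply: sa_atom_holds_sgr.
have [->|q0] := eqVneq (upoly atm.2) 0; first by rewrite !horner0.
apply: (@polyrN0_itv _ `]a, b[); rewrite ?in_itv //= => z abz.
apply: contraTN abz => qz; rewrite in_itv /=; apply: free.
apply/flattenP; exists (rootsR (upoly atm.2)); last by rewrite mem_rootsR q0.
by apply/mapP; exists atm => //; apply/flattenP; exists c.
Qed.

End SemialgebraicLine.

Lemma compact_sa_set1_vol_algebraic (R : realType)
    (F : seq (seq (bool * mpoly.mpoly 1 R))) :
  (forall c, List.In c F -> forall a, List.In a c -> alg_poly a.2) ->
  compact (sa_set F) -> exists2 r, algebraic r & vol (sa_set F) = r%:E.
Proof.
move=> F_alg F_compact.
have alg_breakpoints := sa_breakpoints_algebraic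
  (fun c a cF ac => F_alg c (mem_In cF) a (mem_In ac)).
have [N F_bounded] := compact_rV1_bounded F_compact.
have alg_N : algebraic (N%:R : R) by apply: algebraic_nat.
have [mK [r alg_r Kr]] := algebraic_measurable_itvoc
  (@sa_set_locally_constant R F) alg_breakpoints (algebraicN alg_N) alg_N.
rewrite setIidl // in mK Kr.
by exists r; rewrite // vol_rV1.
Qed.

Section Segment.
Variables (R : realType) (c : R).
Hypotheses (c_gt0 : 0 < c) (c_alg : algebraic c).

Definition segment_rV1 : set 'rV[R]_1 :=
  [set v | forall i, (fun=> `[0, c]%classic) i (v ord0 i)].

Let X0 : mpoly.mpoly 1 R := mpoly.mpolyX R (mpoly.mnm1 ord0).
Let cX0 : mpoly.mpoly 1 R := mpoly.mpolyC 1 c - X0.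

Lemma segment_rV1_semialgebraic : semialgebraic segment_rV1.
Proof.
have X0E v : pt_eval X0 v = v ord0 ord0 by rewrite /pt_eval mpoly.mevalXU.
have cX0E v : pt_eval cX0 v = c - v ord0 ord0.
  by rewrite /pt_eval mpoly.mevalB mpoly.mevalC mpoly.mevalXU.
have X0_alg : alg_poly X0.
  by move=> m; rewrite mpoly.mcoeffX; apply: algebraic_nat.
have cX0_alg : alg_poly cX0.
  move=> m; rewrite mpoly.mcoeffB mpoly.mcoeffC.
  by apply: algebraicB (X0_alg m); apply: algebraicM (algebraic_nat _ _).
exists [:: [:: (true, X0)]; [:: (true, cX0)]; [:: (false, X0); (false, cX0)]].
split.
  move=> l l_in a; case: l_in => [<-|[<-|[<-|[]]]] /=.
  - by case=> [<-|[]].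
  - by case=> [<-|[]].
  - by case=> [<-|[<-|[]]].
apply/seteqP; split=> v.
all: rewrite /sa_set /sa_atom_holds /= X0E cX0E subr_gt0 subr_eq0.
  move=> /(_ ord0); rewrite /= in_itv /= !andbT orbF !le_eqVlt eq_sym.
  by case/andP=> /predU1P[->|->] /predU1P[->|->]; rewrite ?eqxx ?orbT.
rewrite !andbT orbF => v_in i; rewrite (ord1 i) /= in_itv /=.
by case/or3P: v_in => [/eqP->|/eqP<-|/andP[/ltW-> /ltW->]]; rewrite ?lexx ?ltW.
Qed.

Lemma segment_rV1_compact : compact segment_rV1.
Proof. by apply: rV_compact => i; apply: segment_compact. Qed.

Lemma segment_rV1_interior : interior segment_rV1 !=set0.
Proof.
have c2_in : c / 2 \in `]0, c[.
  by rewrite in_itv /= divr_gt0 //= ltr_pdivrMr // ltr_pMr // ltr1n.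
exists (rV1 (c / 2)); rewrite /interior.
have near_c2 : nbhs (rV1 (c / 2) ord0 ord0) (fun x : R => x \in `]0, c[).
  by rewrite rV1E; apply: near_in_itvoo.
have near_v : nbhs (rV1 (c / 2)) [set v : 'rV[R]_1 | v ord0 ord0 \in `]0, c[] :=
  @coord_continuous R 1 1 ord0 ord0 (rV1 (c / 2)) _ near_c2.
apply: filterS near_v => v; rewrite /= in_itv /= => /andP[v_gt0 v_ltc] i.
by rewrite (ord1 i) /= in_itv /= !ltW.
Qed.

Lemma vol_segment_rV1 : vol segment_rV1 = c%:E.
Proof.
have segmentE : rV1 @^-1` segment_rV1 = `[0, c]%classic.
  by apply/seteqP; split=> [x /(_ ord0)|x x_in i]; rewrite ?(ord1 i) rV1E.
have segment_measurable : measurable (rV1 @^-1` segment_rV1).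
  by rewrite segmentE; apply: measurable_itv.
rewrite (vol_rV1 segment_measurable) segmentE.
by rewrite lebesgue_measure_itv /= lte_fin c_gt0 oppr0 adde0.
Qed.

End Segment.

Lemma deg_eq1 (R : realType) (p : R) :
  deg p = 1%N <-> p != 0 /\ deg_admissible p 1.
Proof.
rewrite /deg; case: pselect => [p0|p_neq0] /=.
  by split=> // -[]; rewrite p0 eqxx.
case: (pselect (exists k, `[< deg_admissible p k >])) => [adm|no_adm].
  2: by split=> [//|[_ adm1]]; case: no_adm; exists 1%N; apply/asboolP.
case: (ex_minnP adm) => m /asboolP adm_m m_min.
split=> [m1|[_ /asboolP/m_min m_le1]].
  by rewrite -m1; split=> //; apply/eqP.
by apply/eqP; rewrite eqn_leq m_le1; case: adm_m.
Qed.

Theorem mainTheorem5 (R : realType) (p : R) :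
  is_period p -> (deg p = 1%N <-> (algebraic p /\ p != 0)).
Proof.
move=> _; rewrite deg_eq1; split.
  case=> p0 [_ [K [[[F [F_alg ->]] _] [K_compact volK]]]].
  have [r r_alg volr] := compact_sa_set1_vol_algebraic F_alg K_compact.
  split=> //; apply/algebraic_norm.
  by move: volK; rewrite volr => -[<-].
case=> p_alg p0; have p_gt0 : 0 < `|p| by rewrite normr_gt0.
have norm_alg : algebraic `|p| by apply/algebraic_norm.
split=> //; split=> //; exists (segment_rV1 `|p|); split; last split.
- split; [exact: segment_rV1_semialgebraic|exact: segment_rV1_interior].
- exact: segment_rV1_compact.
- exact: vol_segment_rV1.
Qed.
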